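(* Let $k\geq 2$ and $r\geq 2$ be integers, and let $z_1,\dots,z_k\in\mathbb{C}_+:=\{z\in\mathbb{C}:\Re(z)\geq 0\}$ be nonzero and satisfy $\sum_{i=1}^k z_i^r=0$. Then $$\max_{i=1,\dots,k}\mathrm{Arg}(z_i)-\min_{i=1,\dots,k}\mathrm{Arg}(z_i)\geq\frac{\pi}{r}.$$
   Context: $\mathrm{Arg}$ denotes the principal value of the argument of a nonzero complex number. *)

From Stdlib Require Import Reals List.
From Coquelicot Require Import Coquelicot.
Open Scope R_scope.

(* Principal value of the argument, in (-PI, PI]; Arg 0 := 0 (irrelevant
   for the theorem, which only uses nonzero arguments). *)
Definition Arg (z : C) : R :=
  let x := Re z in let y := Im z in
  if Rlt_dec 0 x then atan (y / x)
  else if Rlt_dec x 0 then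
    (if Rle_dec 0 y then atan (y / x) + PI else atan (y / x) - PI)
  else
    (if Rlt_dec 0 y then PI / 2
     else if Rlt_dec y 0 then - (PI / 2) else 0).

Definition maxR (k : nat) (a : nat -> R) : R :=
  fold_right Rmax (a 0%nat) (map a (seq 0 k)).
Definition minR (k : nat) (a : nat -> R) : R :=
  fold_right Rmin (a 0%nat) (map a (seq 0 k)).

(* If all the arguments lay in an interval [m, M] of length < pi/r, the powers
   z_i^r would have arguments in the open interval of length < pi centred at
   c = r (M + m) / 2.  Their components along the direction c would then all be
   positive, so the sum of the z_i^r could not vanish. *)

From Stdlib Require Import Reals List Lra Lia.
From Coquelicot Require Import Coquelicot.
Open Scope R_scope.

Definition dir_comp (c : R) (w : C) : R := cos c * Re w + sin c * Im w.

Lemma dir_comp_sum_n (c : R) (f : nat -> C) (n : nat) :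
  dir_comp c (sum_n f n) = sum_n (fun i => dir_comp c (f i)) n.
Proof.
  unfold dir_comp; induction n as [|n IH].
  - now rewrite !sum_O.
  - rewrite !sum_Sn, <- IH; unfold plus; simpl; unfold Re, Im; ring.
Qed.

Lemma sum_n_pos (g : nat -> R) (n : nat) :
  (forall i, (i <= n)%nat -> 0 < g i) -> 0 < sum_n g n.
Proof.
  induction n as [|n IH]; intros Hg.
  - rewrite sum_O; apply Hg; lia.
  - rewrite sum_Sn; unfold plus; simpl.
    assert (0 < sum_n g n) by (apply IH; intros; apply Hg; lia).
    assert (0 < g (S n)) by (apply Hg; lia).
    lra.
Qed.

Lemma sum_n_neq0_of_dir_comp_pos (c : R) (f : nat -> C) (n : nat) :
  (forall i, (i <= n)%nat -> 0 < dir_comp c (f i)) -> sum_n f n <> RtoC 0.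
Proof.
  intros Hf Hsum.
  assert (Hpos : 0 < dir_comp c (sum_n f n))
    by (rewrite dir_comp_sum_n; exact (sum_n_pos _ _ Hf)).
  rewrite Hsum in Hpos; unfold dir_comp in Hpos; simpl in Hpos; lra.
Qed.

Lemma polar_Arg (z : C) : 0 <= Re z ->
  z = (Cmod z * cos (Arg z), Cmod z * sin (Arg z)).
Proof.
  destruct z as [x y]; unfold Cmod, Arg, Re, Im; cbn [fst snd]; intros Hx.
  destruct (Rlt_dec 0 x) as [Hx0|Hx0].
  - rewrite cos_atan, sin_atan.
    assert (Hs : 0 < sqrt (1 + (y/x)²))
      by (apply sqrt_lt_R0; pose proof (Rle_0_sqr (y/x)); lra).
    assert (E : sqrt (x^2 + y^2) = x * sqrt (1 + (y/x)²)).
    { replace (x^2 + y^2) with ((x*x) * (1 + (y/x)²))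
        by (unfold Rsqr; field; lra).
      rewrite sqrt_mult, sqrt_square; try lra.
      - nra.
      - pose proof (Rle_0_sqr (y/x)); lra. }
    rewrite E; f_equal; field; lra.
  - replace x with 0 by lra.
    destruct (Rlt_dec 0 0) as [H|_]; [lra|].
    replace (0^2 + y^2) with (y*y) by ring.
    destruct (Rlt_dec 0 y) as [Hy|Hy].
    + rewrite sqrt_square, cos_PI2, sin_PI2 by lra; f_equal; ring.
    + destruct (Rlt_dec y 0) as [Hy'|Hy'].
      * replace (y*y) with ((-y)*(-y)) by ring.
        rewrite sqrt_square, cos_neg, sin_neg, cos_PI2, sin_PI2 by lra.
        f_equal; ring.
      * replace y with 0 by lra.
        rewrite Rmult_0_l, sqrt_0; f_equal; ring.
Qed.

Lemma Cpow_polar (rho t : R) (n : nat) :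
  Cpow (rho * cos t, rho * sin t) n
  = (rho ^ n * cos (INR n * t), rho ^ n * sin (INR n * t)).
Proof.
  induction n as [|n IH].
  - simpl; rewrite Rmult_0_l, cos_0, sin_0; unfold RtoC; f_equal; ring.
  - cbn [Cpow]; rewrite IH; unfold Cmult, Re, Im; cbn [fst snd].
    rewrite S_INR, Rmult_plus_distr_r, Rmult_1_l, cos_plus, sin_plus.
    f_equal; simpl; ring.
Qed.

Lemma dir_comp_Cpow_pos (c : R) (z : C) (n : nat) :
  0 <= Re z -> z <> 0 -> Rabs (INR n * Arg z - c) < PI / 2 ->
  0 < dir_comp c (Cpow z n).
Proof.
  intros Hre Hz Hangle.
  rewrite (polar_Arg z Hre), Cpow_polar; unfold dir_comp, Re, Im; cbn [fst snd].
  replace (cos c * (Cmod z ^ n * cos (INR n * Arg z))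
           + sin c * (Cmod z ^ n * sin (INR n * Arg z)))
    with (Cmod z ^ n * cos (INR n * Arg z - c)) by (rewrite cos_minus; ring).
  apply Rmult_lt_0_compat.
  - apply pow_lt, Cmod_gt_0, Hz.
  - apply Rabs_def2 in Hangle as [Hup Hlow]; apply cos_gt_0; lra.
Qed.

Lemma minR_le (k : nat) (a : nat -> R) (i : nat) : (i < k)%nat -> minR k a <= a i.
Proof.
  intros Hi; unfold minR.
  assert (Hin : In (a i) (map a (seq 0 k))) by (apply in_map, in_seq; lia).
  induction (map a (seq 0 k)) as [|x l IH]; simpl in *; [tauto|].
  destruct Hin as [<-|Hin]; [apply Rmin_l|].
  eapply Rle_trans; [apply Rmin_r|auto].
Qed.

Lemma le_maxR (k : nat) (a : nat -> R) (i : nat) : (i < k)%nat -> a i <= maxR k a.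
Proof.
  intros Hi; unfold maxR.
  assert (Hin : In (a i) (map a (seq 0 k))) by (apply in_map, in_seq; lia).
  induction (map a (seq 0 k)) as [|x l IH]; simpl in *; [tauto|].
  destruct Hin as [<-|Hin]; [apply Rmax_l|].
  eapply Rle_trans; [apply IH; auto|apply Rmax_r].
Qed.

Theorem lemma2p2 (k r : nat) (z : nat -> C) :
  (2 <= k)%nat -> (2 <= r)%nat ->
  (forall i, (i < k)%nat -> 0 <= Re (z i) /\ z i <> RtoC 0) ->
  sum_n (fun i => Cpow (z i) r) (k - 1) = RtoC 0 ->
  maxR k (fun i => Arg (z i)) - minR k (fun i => Arg (z i)) >= PI / INR r.
Proof.
  intros Hk Hr Hz Hsum.
  set (M := maxR k (fun i => Arg (z i))).
  set (m := minR k (fun i => Arg (z i))).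
  assert (Hr0 : 0 < INR r) by (apply lt_0_INR; lia).
  apply Rnot_lt_ge; intros Hnarrow.
  assert (Hspread : INR r * (M - m) < PI).
  { apply (Rmult_lt_compat_l (INR r)) in Hnarrow; [|exact Hr0].
    replace (INR r * (PI / INR r)) with PI in Hnarrow by (field; lra).
    exact Hnarrow. }
  revert Hsum; apply (sum_n_neq0_of_dir_comp_pos (INR r * (M + m) / 2)).
  intros i Hi.
  destruct (Hz i ltac:(lia)) as [Hre Hnz].
  assert (Hm : m <= Arg (z i)) by (apply (minR_le k (fun j => Arg (z j))); lia).
  assert (HM : Arg (z i) <= M) by (apply (le_maxR k (fun j => Arg (z j))); lia).
  apply dir_comp_Cpow_pos; [exact Hre|exact Hnz|].
  apply Rabs_def1; nra.
Qed.
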